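(* Let $S\le T_n$ be a transformation monoid and $G$ the normalizer of $S$ in $S_n$. If $a\in S$ is $\mathcal L$-related in $SG$ to an idempotent $e$ of $SG$, then $e\in S$ and $a$ is $\mathcal L$-related in $S$ to $e$.
   Context: A transformation monoid is a subsemigroup of $T_n$ containing the identity map; $G=\{g\in S_n:g^{-1}Sg=S\}$ and $SG=\{sg:s\in S,g\in G\}$, a semigroup. For a semigroup $U$, elements $a,b\in U$ are $\mathcal L$-related in $U$ if there exist $u,v\in U^1$ with $a=ub$ and $b=va$, where $U^1$ is $U$ with an identity adjoined. *)

From mathcomp Require Import all_boot all_fingroup.
Set Implicit Arguments. Unset Strict Implicit. Unset Printing Implicit Defensive.

Definition tr (n : nat) := {ffun 'I_n -> 'I_n}.

(* Composition with maps acting on the right (semigroup-theory convention):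
   x (f g) = (x f) g, i.e. apply f first, then g. *)
Definition tmul n (f g : tr n) : tr n := [ffun x => g (f x)].

Definition tid n : tr n := [ffun x => x].

Definition permf n (g : {perm 'I_n}) : tr n := [ffun x => g x].

Definition is_tmonoid n (S : {set tr n}) : Prop :=
  tid n \in S /\ (forall s t, s \in S -> t \in S -> tmul s t \in S).

Definition normalizer n (S : {set tr n}) : {set {perm 'I_n}} :=
  [set g : {perm 'I_n} |
     [set tmul (tmul (permf g^-1) s) (permf g) | s in S] == S].

Definition SG n (S : {set tr n}) : {set tr n} :=
  [set tmul s (permf g) | s in S, g in normalizer S].

(* a = u b for some u in U^1 (U with an identity adjoined). *)
Definition left_mult_of n (U : {set tr n}) (a b : tr n) : Prop :=
  a = b \/ exists2 u, u \in U & a = tmul u b.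

Definition Lrel n (U : {set tr n}) (a b : tr n) : Prop :=
  left_mult_of U a b /\ left_mult_of U b a.

From mathcomp Require Import all_boot all_fingroup.
Set Implicit Arguments. Unset Strict Implicit. Unset Printing Implicit Defensive.

(* Every g in G has finite order m, and for s in S the power (s g)^k is of the
   form y g^k with y in S, because conjugation by g preserves S.  Hence
   g (s g)^(m-1) = g y g^-1 lies in S.  An idempotent e = s g of SG equals
   e^m = s (g (s g)^(m-1)), so e is in S.  If moreover a = u e and e = v a with
   v = s g, then a = a e = (a v) a, so e = v (a v)^(m-1) a, and the
   multiplier v (a v)^(m-1) = s (g ((a s) g)^(m-1)) lies in S. *)

Section TransformationPowers.

Variable n : nat.
Implicit Types (f g h : tr n) (p q : {perm 'I_n}).

Lemma tmulA f g h : tmul f (tmul g h) = tmul (tmul f g) h.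
Proof. by apply/ffunP=> x; rewrite !ffunE. Qed.

Lemma tmul1l f : tmul (tid n) f = f.
Proof. by apply/ffunP=> x; rewrite !ffunE. Qed.

Lemma tmul1r f : tmul f (tid n) = f.
Proof. by apply/ffunP=> x; rewrite !ffunE. Qed.

Lemma permf1 : permf 1 = tid n.
Proof. by apply/ffunP=> x; rewrite !ffunE perm1. Qed.

Lemma permfM p q : permf (p * q) = tmul (permf p) (permf q).
Proof. by apply/ffunP=> x; rewrite !ffunE permM. Qed.

Fixpoint tpow f k : tr n := if k is k'.+1 then tmul f (tpow f k') else tid n.

Lemma tpow_idem f k : tmul f f = f -> tpow f k.+1 = f.
Proof. by move=> ff; elim: k => [|k /= ->]; rewrite /= ?tmul1r. Qed.

Lemma tpow_fix f h k : tmul f h = h -> tmul (tpow f k) h = h.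
Proof. by move=> fh; elim: k => [|k IH] /=; rewrite ?tmul1l // -tmulA IH. Qed.

Variable S : {set tr n}.
Hypothesis S_monoid : is_tmonoid S.

Lemma normalizer_conj p y :
  p \in normalizer S -> y \in S -> tmul (tmul (permf p) y) (permf p^-1) \in S.
Proof.
rewrite inE => /eqP pS yS.
have : y \in [set tmul (tmul (permf p^-1) s) (permf p) | s in S] by rewrite pS.
case/imsetP=> s sS ->.
suff -> : tmul (tmul (permf p) (tmul (tmul (permf p^-1) s) (permf p)))
            (permf p^-1) = s by [].
by apply/ffunP=> x; rewrite !ffunE !permK.
Qed.

Lemma tpow_mul_permf k x p : x \in S -> p \in normalizer S ->
  exists2 y, y \in S & tpow (tmul x (permf p)) k = tmul y (permf (p ^+ k)).
Proof.
have [S1 SM] := S_monoid; move=> xS pG; elim: k => [|k [y yS IH]].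
  by exists (tid n); rewrite /= ?expg0 ?permf1 ?tmul1r.
exists (tmul x (tmul (tmul (permf p) y) (permf p^-1))).
  by rewrite SM ?normalizer_conj.
by rewrite /= IH expgS permfM; apply/ffunP=> z; rewrite !ffunE permKV.
Qed.

Lemma permf_mul_tpow_in x p : x \in S -> p \in normalizer S ->
  tmul (permf p) (tpow (tmul x (permf p)) #[p]%g.-1) \in S.
Proof.
move=> xS pG; have [y yS ->] := tpow_mul_permf #[p]%g.-1 xS pG.
have -> : (p ^+ #[p]%g.-1 = p^-1)%g.
  by apply/(mulgI p); rewrite -expgS prednK ?order_gt0 // expg_order mulgV.
by rewrite tmulA normalizer_conj.
Qed.

End TransformationPowers.

Theorem lemma4p3 (n : nat) (S : {set tr n}) (a e : tr n) :
  is_tmonoid S ->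
  a \in S ->
  e \in SG S ->
  tmul e e = e ->
  Lrel (SG S) a e ->
  e \in S /\ Lrel S a e.
Proof.
move=> HS aS eSG ee [ae ea]; have [_ SM] := HS.
have eS : e \in S.
  case/imset2P: eSG => s g sS gG e_sg.
  rewrite -(tpow_idem #[g]%g.-1 ee) /= e_sg -tmulA.
  by rewrite SM ?(permf_mul_tpow_in HS).
have aea : tmul a e = a by case: ae => [-> | [u _ ->]]; rewrite -?tmulA ee.
split=> //; split; first by right; exists a.
case: ea => [-> | [v vSG e_va]]; first by left.
right; case/imset2P: vSG e_va => s g sS gG -> e_va.
have ava : tmul (tmul a (tmul s (permf g))) a = a by rewrite -tmulA -e_va.
exists (tmul s (tmul (permf g) (tpow (tmul (tmul a s) (permf g)) #[g]%g.-1))).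
  by rewrite SM ?(permf_mul_tpow_in HS) ?SM.
by rewrite -!tmulA tpow_fix // e_va -tmulA.
Qed.
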